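(* Let $G$ be a topological group and let $X$ be a $G$-Banach space, i.e. a (real) Banach space equipped with a continuous action of $G$ by linear isometries. Then there exists an equivalent norm $\|\cdot\|'$ on $X$ that is strictly convex and $G$-invariant (i.e. $\|g\cdot x\|'=\|x\|'$ for all $g\in G$, $x\in X$) if and only if there exist a strictly convex $G$-Banach space $Y$ and a bounded injective $G$-equivariant linear operator from $X$ to $Y$.
   Context: A linear operator $\phi:X\to Y$ between $G$-Banach spaces is $G$-equivariant if $\phi(g\cdot x)=g\cdot\phi(x)$ for all $g\in G$, $x\in X$. A norm $\|\cdot\|$ is strictly convex if for every $x\neq y$ with $\|x\|=\|y\|$ one has $\|\frac{x+y}{2}\|<\|x\|$. *)

From HB Require Import structures.
From mathcomp Require Import all_boot all_order all_algebra.
From mathcomp Require Import all_classical all_reals all_analysis.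
Set Implicit Arguments. Unset Strict Implicit. Unset Printing Implicit Defensive.
Import Order.TTheory GRing.Theory Num.Theory.
Import numFieldNormedType.Exports.
Local Open Scope ring_scope.

Definition topological_group (G : topologicalType)
  (mul : G -> G -> G) (inv : G -> G) (one : G) : Prop :=
  [/\ (forall a b c, mul a (mul b c) = mul (mul a b) c),
      (forall a, mul one a = a /\ mul a one = a),
      (forall a, mul (inv a) a = one /\ mul a (inv a) = one),
      continuous (fun p : G * G => mul p.1 p.2) &
      continuous inv].

Definition G_Banach_action (R : realType) (G : topologicalType)
  (mul : G -> G -> G) (one : G) (X : normedModType R) (act : G -> X -> X) : Prop :=
  [/\ (forall x, act one x = x),
      (forall g h x, act (mul g h) x = act g (act h x)),
      (forall g, linear (act g)),
      (forall g x, `|act g x| = `|x|) &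
      continuous (fun p : G * X => act p.1 p.2)].

Definition is_norm (R : realType) (X : lmodType R) (N : X -> R) : Prop :=
  [/\ (forall x, 0 <= N x),
      (forall x, N x = 0 -> x = 0),
      (forall (a : R) x, N (a *: x) = `|a| * N x) &
      (forall x y, N (x + y) <= N x + N y)].

Definition equivalent_norm (R : realType) (X : normedModType R) (N : X -> R) : Prop :=
  is_norm N /\ exists c C : R, [/\ 0 < c, 0 < C &
     forall x, c * `|x| <= N x /\ N x <= C * `|x|].

Definition strictly_convex (R : realType) (X : lmodType R) (N : X -> R) : Prop :=
  forall x y : X, x <> y -> N x = N y -> N (2^-1 *: (x + y)) < N x.

Definition G_invariant (R : realType) (G : Type) (X : Type)
  (act : G -> X -> X) (N : X -> R) : Prop :=
  forall g x, N (act g x) = N x.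

Definition G_equivariant (G X Y : Type) (actX : G -> X -> X) (actY : G -> Y -> Y)
  (phi : X -> Y) : Prop :=
  forall g x, phi (actX g x) = actY g (phi x).

Definition bounded_linear (R : realType) (X Y : normedModType R) (phi : X -> Y) : Prop :=
  linear phi /\ exists C : R, forall x, `|phi x| <= C * `|x|.

From HB Require Import structures.
From mathcomp Require Import all_boot all_order all_algebra.
From mathcomp Require Import all_classical all_reals all_analysis.
From mathcomp Require Import lra.
Import Order.TTheory GRing.Theory Num.Theory.
Import numFieldNormedType.Exports.
Set Implicit Arguments. Unset Strict Implicit. Unset Printing Implicit Defensive.
Local Open Scope ring_scope.

(* Forward: renorming X by the invariant strictly convex norm gives a
   strictly convex G-Banach space, and the identity is the required operator.
   Backward: for phi : X -> Y bounded, injective and equivariant, the graph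
   norm |x| + |phi x| is equivalent and G-invariant.  It is strictly convex
   because in a strictly convex space equality in the triangle inequality
   forces |a| b = |b| a; applied to phi x, phi y and pulled back along the
   injective phi, this makes y a multiple of x, and equal norms then give
   x = y. *)

(* X with N as its norm; indexing by the proof hN lets the structure
   instances below use the equivalence of N with the original norm. *)
Definition renormed (R : realType) (X : normedModType R) (N : X -> R)
  (hN : equivalent_norm N) : Type := X.

Section Renormed.
Variables (R : realType) (X : normedModType R) (N : X -> R).
Hypothesis hN : equivalent_norm N.

HB.instance Definition _ := GRing.Lmodule.on (renormed hN).

Let N_triangle (x y : renormed hN) : N (x + y) <= N x + N y.
Proof. by have [[]] := hN. Qed.

Let N_scale (a : R) (x : renormed hN) : N (a *: x) = `|a| * N x.
Proof. by have [[]] := hN. Qed.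

Let N_eq0 (x : renormed hN) : N x = 0 -> x = 0.
Proof. by have [[_ /(_ x)]] := hN. Qed.

HB.instance Definition _ := Lmodule_isNormed.Build R (renormed hN) N_triangle N_scale N_eq0.

Lemma renormed_normE (x : renormed hN) : `|x| = N x.
Proof. by []. Qed.

Lemma nbhs_renormed (x : X) : nbhs (x : renormed hN) = nbhs x.
Proof.
have [_ [c [C [c_gt0 C_gt0 N_bounds]]]] := hN.
apply/seteqP; split=> P /nbhs_normP[e e_gt0 sP].
- apply/(@nbhs_normP _ X); exists (e / C); first exact: divr_gt0.
  move=> y /= xy; apply: sP => /=; rewrite renormed_normE.
  apply: le_lt_trans (N_bounds (x - y)).2 _.
  by rewrite -ltr_pdivlMl // mulrC.
- apply/(@nbhs_normP _ (renormed hN)); exists (c * e); first exact: mulr_gt0.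
  move=> y /= xy; apply: sP => /=.
  by rewrite -(ltr_pM2l c_gt0); apply: le_lt_trans (N_bounds (x - y)).1 xy.
Qed.

Lemma renormed_continuous (T : topologicalType) (f : T * X -> X) :
  continuous f -> continuous (f : T * renormed hN -> renormed hN).
Proof.
move=> f_cont [t x] Q.
rewrite /= nbhs_renormed => /(f_cont (t, x)).
by rewrite /= /nbhs /= -nbhs_renormed.
Qed.

Lemma renormed_bounded_id : bounded_linear (id : X -> renormed hN).
Proof.
have [_ [c [C [_ _ N_bounds]]]] := hN.
by split=> //; exists C => x; rewrite renormed_normE; case: (N_bounds x).
Qed.

Lemma renormed_G_Banach_action (G : topologicalType) (mul : G -> G -> G) (one : G)
    (act : G -> X -> X) :
  G_Banach_action mul one act -> G_invariant act N ->
  G_Banach_action mul one (act : G -> renormed hN -> renormed hN).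
Proof.
case=> act1 actM act_lin _ act_cont N_inv; split=> //.
exact: renormed_continuous.
Qed.

End Renormed.

Section RenormedComplete.
Variables (R : realType) (X : completeNormedModType R) (N : X -> R).
Hypothesis hN : equivalent_norm N.

Lemma renormed_cauchy_cvg (F : set_system (renormed hN)) :
  ProperFilter F -> cauchy F -> cvg F.
Proof.
move=> F_proper /cauchy_ballP F_cauchy.
have [_ [c [C [c_gt0 _ N_bounds]]]] := hN.
have /cauchy_cvg F_cvg : cauchy (F : set_system X).
  apply/cauchy_ballP => e e_gt0.
  apply: filterS (F_cauchy _ (mulr_gt0 c_gt0 e_gt0)) => -[a b] /=.
  rewrite -!ball_normE /= renormed_normE => ab.
  by rewrite -(ltr_pM2l c_gt0); apply: le_lt_trans (N_bounds (a - b)).1 ab.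
by apply/cvg_ex; exists (lim (F : set_system X)) => P; rewrite nbhs_renormed; apply: F_cvg.
Qed.

HB.instance Definition _ := Uniform_isComplete.Build (renormed hN) renormed_cauchy_cvg.

End RenormedComplete.

Section StrictlyConvexNorm.
Variables (R : realType) (Y : normedModType R).
Hypothesis Y_sc : strictly_convex (fun y : Y => `|y|).

Lemma strictly_convex_normD_lt (a b : Y) :
  a <> b -> `|a| = `|b| -> `|a + b| < `|a| + `|b|.
Proof.
move=> ab nab; have := Y_sc ab nab.
by rewrite /= normrZ ger0_norm ?invr_ge0 // -nab; lra.
Qed.

Lemma strictly_convex_normD_eq (a b : Y) :
  `|a + b| = `|a| + `|b| -> `|a| *: b = `|b| *: a.
Proof.
wlog le_ab : a b / `|a| <= `|b|.
  move=> wlog_le ab_eq; have [/wlog_le->//|/ltW le_ba] := leP `|a| `|b|.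
  by apply/esym/wlog_le; rewrite // addrC ab_eq addrC.
move=> ab_eq; have [->|a_neq0] := eqVneq a 0; first by rewrite normr0 scale0r scaler0.
have b_gt0 : 0 < `|b| by apply: lt_le_trans le_ab; rewrite normr_gt0.
set k := `|a| / `|b|.
have k_ge0 : 0 <= k by rewrite divr_ge0.
have k_le1 : k <= 1 by rewrite ler_pdivrMr // mul1r.
have kb_norm : k * `|b| = `|a| by rewrite divfK ?gt_eqF.
have a_eq : a = k *: b.
  apply/eqP; apply: contraT => /eqP a_neq.
  have := strictly_convex_normD_lt a_neq; rewrite normrZ ger0_norm // kb_norm.
  have : `|a + b| <= `|a + k *: b| + (1 - k) * `|b|.
    have -> : a + b = (a + k *: b) + (1 - k) *: b.
      by rewrite scalerBl scale1r -addrA (addrC (k *: b)) subrK.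
    by apply: le_trans (ler_normD _ _) _; rewrite normrZ ger0_norm ?subr_ge0.
  rewrite mulrBl mul1r kb_norm; lra.
by rewrite {2}a_eq scalerA mulrC kb_norm.
Qed.

End StrictlyConvexNorm.

Section GraphNorm.
Variables (R : realType) (X Y : normedModType R) (phi : X -> Y).
Hypothesis phi_linear : linear phi.

HB.instance Definition _ := GRing.isLinear.Build R X Y *:%R phi phi_linear.

Definition graph_norm (x : X) : R := `|x| + `|phi x|.

Lemma graph_norm_is_norm : is_norm graph_norm.
Proof.
split=> [x | x /eqP | a x | x y]; rewrite /graph_norm.
- by rewrite addr_ge0.
- by rewrite paddr_eq0 // => /andP[/eqP/normr0_eq0].
- by rewrite linearZ !normrZ mulrDr.
- by rewrite linearD addrACA lerD ?ler_normD.
Qed.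

Lemma graph_norm_equivalent (C : R) :
  (forall x, `|phi x| <= C * `|x|) -> equivalent_norm graph_norm.
Proof.
move=> phi_bound; split; first exact: graph_norm_is_norm.
exists 1, (1 + `|C|); split=> // x; rewrite /graph_norm mul1r lerDl; split=> //.
rewrite mulrDl mul1r lerD2l; apply: le_trans (phi_bound x) _.
exact: ler_wpM2r (ler_norm C).
Qed.

Lemma graph_norm_strictly_convex :
  injective phi -> strictly_convex (fun y : Y => `|y|) -> strictly_convex graph_norm.
Proof.
move=> phi_inj Y_sc x y xy Nxy.
have [_ N_eq0 N_scale _] := graph_norm_is_norm.
rewrite N_scale ger0_norm ?invr_ge0 // ltNge; apply/negP => mid_ge.
have phiD_eq : `|phi x + phi y| = `|phi x| + `|phi y|.
  apply/le_anti; rewrite ler_normD /=.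
  move: mid_ge Nxy (ler_normD x y); rewrite /graph_norm linearD; lra.
have scale_eq : `|phi x| *: y = `|phi y| *: x.
  by apply: phi_inj; rewrite !linearZ; exact: strictly_convex_normD_eq.
have Nx_neq0 : graph_norm x != 0.
  by apply/eqP => Nx0; apply: xy; rewrite (N_eq0 _ Nx0) (N_eq0 y) // -Nxy.
have phi_norm_eq : `|phi x| = `|phi y|.
  apply: (mulIf Nx_neq0); move: (congr1 graph_norm scale_eq).
  by rewrite !N_scale !normr_id -Nxy.
have phix_neq0 : `|phi x| != 0.
  rewrite normr_eq0 raddf_eq0 //.
  by apply: contraNneq Nx_neq0 => ->; rewrite /graph_norm linear0 !normr0 addr0.
by apply: xy; apply: (scalerI phix_neq0); rewrite /= scale_eq phi_norm_eq.
Qed.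

Lemma graph_norm_invariant (G : Type) (actX : G -> X -> X) (actY : G -> Y -> Y) :
  G_invariant actX (fun x => `|x|) -> G_invariant actY (fun y => `|y|) ->
  G_equivariant actX actY phi -> G_invariant actX graph_norm.
Proof. by move=> X_iso Y_iso phi_eqv g x; rewrite /graph_norm phi_eqv X_iso Y_iso. Qed.

End GraphNorm.

Theorem proposition3p1 (R : realType) (G : topologicalType)
  (mul : G -> G -> G) (inv : G -> G) (one : G)
  (X : completeNormedModType R) (act : G -> X -> X) :
  topological_group mul inv one ->
  G_Banach_action mul one act ->
  (exists N : X -> R,
      [/\ equivalent_norm N, strictly_convex N & G_invariant act N])
  <->
  (exists (Y : completeNormedModType R) (actY : G -> Y -> Y) (phi : X -> Y),
      [/\ G_Banach_action mul one actY,
          strictly_convex (fun y : Y => `|y|),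
          bounded_linear phi,
          injective phi &
          G_equivariant act actY phi]).
Proof.
move=> _ act_Banach; split.
  move=> [N [N_equiv N_sc N_inv]].
  exists (renormed N_equiv), act, id; split=> //.
  - exact: renormed_G_Banach_action.
  - exact: renormed_bounded_id.
move=> [Y [actY [phi [[_ _ _ actY_iso _] Y_sc [phi_lin [C phi_bound]] phi_inj phi_eqv]]]].
exists (graph_norm phi); split.
- exact: graph_norm_equivalent phi_bound.
- exact: graph_norm_strictly_convex.
- by case: act_Banach => _ _ _ act_iso _; exact: graph_norm_invariant.
Qed.
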